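(* Let $\mathbf{A}=(a_{ij})$ be a table with a proper row partition $(R_1,\dots,R_k)$ and a proper column partition $(C_1,\dots,C_k)$, and assume that there are numbers $c_{ab}>0$ ($1\le a,b\le k$) such that $a_{ij}=c_{ab}$ for all $1\le a,b\le k$, $i\in R_a$, $j\in C_b$. Then \[ 0={\mathrm{disc}}_k(\mathbf{A})={\mathrm{disc}}_{k+1}(\mathbf{A})=\cdots={\mathrm{disc}}_{\mathrm{rank}\,\mathbf{A}}(\mathbf{A}). \]
   Context: Standing assumptions: $\mathbf{A}$ is an $m\times n$ array of nonnegative entries whose total sum is $1$, and $\mathbf{A}$ is non-decomposable ($\mathbf{A}\mathbf{A}^T$ if $m\le n$, or $\mathbf{A}^T\mathbf{A}$ if $m>n$, is irreducible); in particular all row sums $d_{row,i}=\sum_j a_{ij}$ and column sums $d_{col,j}=\sum_i a_{ij}$ are positive. Let $R$ be the row set and $C$ the column set. For $X\subset R$, $Y\subset C$: ${\mathrm{Vol}}(X)=\sum_{i\in X}d_{row,i}$, ${\mathrm{Vol}}(Y)=\sum_{j\in Y}d_{col,j}$, $a(X,Y)=\sum_{i\in X}\sum_{j\in Y}a_{ij}$, and for nonempty $X,Y$, $\rho(X,Y)=\frac{a(X,Y)}{{\mathrm{Vol}}(X){\mathrm{Vol}}(Y)}$. For a proper $\ell$-partition $R_1,\dots,R_\ell$ of $R$ and $C_1,\dots,C_\ell$ of $C$ (all parts nonempty), and nonempty $X\subset R_a$, $Y\subset C_b$, ${\mathrm{disc}}(X,Y;R_a,C_b)=|\rho(X,Y)-\rho(R_a,C_b)|\sqrt{{\mathrm{Vol}}(X){\mathrm{Vol}}(Y)}$;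 ${\mathrm{disc}}(\mathbf{A};R_1,\dots,R_\ell,C_1,\dots,C_\ell)=\max_{1\le a,b\le \ell}\max_{X\subset R_a,\,Y\subset C_b}{\mathrm{disc}}(X,Y;R_a,C_b)$; and ${\mathrm{disc}}_\ell(\mathbf{A})$ is the minimum of this quantity over all proper $\ell$-partitions of the rows and of the columns. *)

From HB Require Import structures.
From mathcomp Require Import all_boot all_order all_algebra.
Set Implicit Arguments. Unset Strict Implicit. Unset Printing Implicit Defensive.
Import Order.TTheory GRing.Theory Num.Theory.
Local Open Scope ring_scope.

Section Defs.
Variable R : rcfType.
Variables m n : nat.
Implicit Type A : 'M[R]_(m, n).

Definition volR A (X : {set 'I_m}) : R := \sum_(i in X) \sum_(j < n) A i j.
Definition volC A (Y : {set 'I_n}) : R := \sum_(j in Y) \sum_(i < m) A i j.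
Definition aXY A (X : {set 'I_m}) (Y : {set 'I_n}) : R :=
  \sum_(i in X) \sum_(j in Y) A i j.
Definition rho A X Y : R := aXY A X Y / (volR A X * volC A Y).

Definition discXY A (X Ra : {set 'I_m}) (Y Cb : {set 'I_n}) : R :=
  `|rho A X Y - rho A Ra Cb| * Num.sqrt (volR A X * volC A Y).

(* an l-partition of a finite index set, given by labelling each element
   with its part; it is proper iff every part is nonempty (surjective). *)
Definition proper_part (T : finType) (l : nat) (f : {ffun T -> 'I_l}) : bool :=
  [forall a : 'I_l, a \in codom f].

Definition part_block (T : finType) (l : nat) (f : {ffun T -> 'I_l}) (a : 'I_l)
  : {set T} := [set x | f x == a].

(* disc(A; R_1..R_l, C_1..C_l) : the maximum over blocks a,b and nonempty
   X ⊆ R_a, Y ⊆ C_b (all values are >= 0, so 0 is a neutral element). *)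
Definition disc_part A (l : nat) (f : {ffun 'I_m -> 'I_l}) (g : {ffun 'I_n -> 'I_l})
  : R :=
  \big[Num.max/0]_(a : 'I_l) \big[Num.max/0]_(b : 'I_l)
   \big[Num.max/0]_(X : {set 'I_m} | (X != set0) && (X \subset part_block f a))
   \big[Num.max/0]_(Y : {set 'I_n} | (Y != set0) && (Y \subset part_block g b))
     discXY A X (part_block f a) Y (part_block g b).

Definition proper_pair (l : nat) (p : {ffun 'I_m -> 'I_l} * {ffun 'I_n -> 'I_l})
  : bool := proper_part p.1 && proper_part p.2.

(* The big
   min uses as initial value the maximum over the same (finite) family, so
   that it equals the true minimum whenever the family is nonempty. *)
Definition disc_l A (l : nat) : R :=
  let M := \big[Num.max/0]_(p : {ffun 'I_m -> 'I_l} * {ffun 'I_n -> 'I_l} | proper_pair p)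
     disc_part A p.1 p.2 in
  \big[Num.min/M]_(p : {ffun 'I_m -> 'I_l} * {ffun 'I_n -> 'I_l} | proper_pair p)
     disc_part A p.1 p.2.

Definition irreducible_mx (k : nat) (B : 'M[R]_k) : Prop :=
  forall i j : 'I_k, connect [rel x y | B x y != 0] i j.

Definition non_decomposable A : Prop :=
  if (m <= n)%N then irreducible_mx (A *m A^T) else irreducible_mx (A^T *m A).

End Defs.

(** Refining the given partitions never breaks the block structure: if every
    row class of a proper [l]-partition lies inside some [R_a] and every column
    class inside some [C_b], then [A] is constant on each product of classes,
    all rows of a class have the same sum and all columns the same sum.  Hence
    [rho X Y] takes the same value for all nonempty [X] and [Y] inside a pair
    of classes, and every discrepancy term vanishes.  Such refinements exist
    for every [l] between [k] and [rank A <= min m n]: a proper partition of a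
    set with more elements than parts has a part with two elements, one of
    which can be split off as a new part. *)

From HB Require Import structures.
From mathcomp Require Import all_boot all_order all_algebra.
Import Order.TTheory GRing.Theory Num.Theory.
Local Open Scope ring_scope.
Set Implicit Arguments. Unset Strict Implicit.

Definition refines (T I J : Type) (f : T -> I) (r : T -> J) : Prop :=
  forall x y, f x = f y -> r x = r y.

Section Refinement.
Variable T : finType.

Definition split_part l (f : {ffun T -> 'I_l}) (x : T) : {ffun T -> 'I_l.+1} :=
  [ffun t => if t == x then ord_max else lift ord_max (f t)].

Lemma refines_split_part l (f : {ffun T -> 'I_l}) x : refines (split_part f x) f.
Proof.
move=> u v; rewrite !ffunE.
have max_lift (a : 'I_l) : ord_max <> lift ord_max a.
  by move=> e; have := neq_lift ord_max a; rewrite -e eqxx.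
case: eqP => [-> | _]; case: eqP => [-> | _] //.
- by move/max_lift.
- by move/esym/max_lift.
- exact: lift_inj.
Qed.

Lemma proper_split_part l (f : {ffun T -> 'I_l}) x y :
  proper_part f -> x != y -> f x = f y -> proper_part (split_part f x).
Proof.
move=> /forallP f_onto neq_xy fxy; apply/forallP => a; apply/codomP.
case: (unliftP ord_max a) => [b -> | ->]; last by exists x; rewrite ffunE eqxx.
have /codomP [t ->] := f_onto b.
have [tx | ntx] := eqVneq t x.
  by exists y; rewrite ffunE eq_sym (negbTE neq_xy) -fxy tx.
by exists t; rewrite ffunE (negbTE ntx).
Qed.

Lemma exists_collision (T' : finType) (f : T -> T') :
  (#|T'| < #|T|)%N -> exists x, exists2 y, x != y & f x = f y.
Proof.
move=> lt_T'_T; apply/injectivePn; apply: contraTN lt_T'_T.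
by move/injectiveP/leq_card; rewrite -leqNgt.
Qed.

Lemma exists_proper_refinement k (r : {ffun T -> 'I_k}) l :
  proper_part r -> (k <= l <= #|T|)%N ->
  exists2 f : {ffun T -> 'I_l}, proper_part f & refines f r.
Proof.
move=> r_proper /andP[/subnKC <-]; elim: (l - k)%N => [|d IH] le_T.
  by rewrite addn0; exists r.
rewrite addnS in le_T *.
have [f f_proper f_r] := IH (ltnW le_T).
have [x [y neq_xy fxy]] : exists x, exists2 y, x != y & f x = f y.
  by apply: (@exists_collision _ f); rewrite card_ord.
exists (split_part f x); first exact: proper_split_part neq_xy fxy.
by move=> u v /refines_split_part /f_r.
Qed.

End Refinement.

Section BlockConstant.
Variables (R : rcfType) (m n : nat) (A : 'M[R]_(m, n)).

Definition block_constant (I J : Type) (f : 'I_m -> I) (g : 'I_n -> J) : Prop :=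
  forall i i' j j', f i = f i' -> g j = g j' -> A i j = A i' j'.

Lemma block_constant_refines (I J I' J' : Type) (f : 'I_m -> I) (g : 'I_n -> J)
    (f' : 'I_m -> I') (g' : 'I_n -> J') :
  block_constant f g -> refines f' f -> refines g' g -> block_constant f' g'.
Proof. by move=> Afg f'f g'g i i' j j' /f'f fi /g'g gj; apply: Afg. Qed.

Lemma rho_uniform (X : {set 'I_m}) (Y : {set 'I_n}) (a d e : R) :
  X != set0 -> Y != set0 ->
  {in X & Y, forall i j, A i j = a} ->
  {in X, forall i, \sum_(j < n) A i j = d} ->
  {in Y, forall j, \sum_(i < m) A i j = e} ->
  rho A X Y = a / (d * e).
Proof.
move=> X0 Y0 A_a rows_d cols_e.
have aXY_eq : aXY A X Y = a * (#|X| * #|Y|)%:R.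
  rewrite /aXY (eq_bigr (fun=> a *+ #|Y|)) => [|i iX]; last first.
    by rewrite -sumr_const; apply: eq_bigr => j jY; rewrite A_a.
  by rewrite sumr_const -mulrnA mulr_natr mulnC.
have volR_eq : volR A X = d * #|X|%:R.
  by rewrite /volR (eq_bigr (fun=> d)) ?sumr_const ?mulr_natr.
have volC_eq : volC A Y = e * #|Y|%:R.
  by rewrite /volC (eq_bigr (fun=> e)) ?sumr_const ?mulr_natr.
have N_neq0 : (#|X| * #|Y|)%:R != 0 :> R.
  by rewrite pnatr_eq0 muln_eq0 !cards_eq0 negb_or X0 Y0.
(* [d * e] may vanish, but then both sides are [0] since [x / 0 = 0]. *)
by rewrite /rho aXY_eq volR_eq volC_eq mulrACA -natrM invfM mulrACA divff ?mulr1.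
Qed.

Variables (l : nat) (f : {ffun 'I_m -> 'I_l}) (g : {ffun 'I_n -> 'I_l}).
Hypothesis A_fg : block_constant f g.

Lemma rho_block (i0 : 'I_m) (j0 : 'I_n) (X : {set 'I_m}) (Y : {set 'I_n}) :
  X != set0 -> X \subset part_block f (f i0) ->
  Y != set0 -> Y \subset part_block g (g j0) ->
  rho A X Y = A i0 j0 / ((\sum_(j < n) A i0 j) * \sum_(i < m) A i j0).
Proof.
move=> X0 /subsetP sub_X Y0 /subsetP sub_Y.
have f_X i : i \in X -> f i = f i0 by move/sub_X; rewrite inE => /eqP.
have g_Y j : j \in Y -> g j = g j0 by move/sub_Y; rewrite inE => /eqP.
apply: rho_uniform => // [i j /f_X fi /g_Y gj | i /f_X fi | j /g_Y gj].
- exact: A_fg.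
- by apply: eq_bigr => j _; exact: A_fg.
- by apply: eq_bigr => i _; exact: A_fg.
Qed.

Lemma discXY_block (a b : 'I_l) (X : {set 'I_m}) (Y : {set 'I_n}) :
  X != set0 -> X \subset part_block f a ->
  Y != set0 -> Y \subset part_block g b ->
  discXY A X (part_block f a) Y (part_block g b) = 0.
Proof.
move=> X0 sub_X Y0 sub_Y.
have [i0 i0X] := set0Pn _ X0; have [j0 j0Y] := set0Pn _ Y0.
have := subsetP sub_X _ i0X; rewrite inE => /eqP fa.
have := subsetP sub_Y _ j0Y; rewrite inE => /eqP gb.
rewrite -fa -gb in sub_X sub_Y *.
have block0 (T : finType) (h : {ffun T -> 'I_l}) t : part_block h (h t) != set0.
  by apply/set0Pn; exists t; rewrite inE.
rewrite /discXY (rho_block X0 sub_X Y0 sub_Y).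
rewrite (rho_block (block0 _ f i0) (subxx _) (block0 _ g j0) (subxx _)).
by rewrite subrr normr0 mul0r.
Qed.

Lemma disc_part_block : disc_part A f g = 0.
Proof.
have max0 := @big1_idem R Num.max 0 (maxxx 0).
apply: (max0) => a _; apply: (max0) => b _.
apply: (max0) => X /andP[X0 sub_X]; apply: (max0) => Y /andP[Y0 sub_Y].
exact: discXY_block.
Qed.

End BlockConstant.

Lemma disc_l_eq0 (R : rcfType) (m n l : nat) (A : 'M[R]_(m, n))
    (f : {ffun 'I_m -> 'I_l}) (g : {ffun 'I_n -> 'I_l}) :
  proper_part f -> proper_part g -> block_constant A f g -> disc_l A l = 0.
Proof.
move=> f_proper g_proper A_fg; apply/eqP; rewrite /disc_l eq_le; apply/andP; split.
  apply: (bigmin_inf (f, g)); first by rewrite /proper_pair f_proper g_proper.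
  by rewrite /= (disc_part_block A_fg).
by apply: le_bigmin => [|p _]; apply: bigmax_ge_id.
Qed.

Theorem mainTheorem5 (R : rcfType) (m n k : nat) (A : 'M[R]_(m, n))
  (A_nonneg : forall i j, 0 <= A i j)
  (A_sum1 : \sum_(i < m) \sum_(j < n) A i j = 1)
  (A_nondec : non_decomposable A)
  (row_pos : forall i, 0 < \sum_(j < n) A i j)
  (col_pos : forall j, 0 < \sum_(i < m) A i j)
  (r : {ffun 'I_m -> 'I_k}) (s : {ffun 'I_n -> 'I_k})
  (r_proper : proper_part r) (s_proper : proper_part s)
  (c : 'I_k -> 'I_k -> R) (c_pos : forall a b, 0 < c a b)
  (A_block : forall i j, A i j = c (r i) (s j)) :
  disc_l A k = 0 /\
  (forall l : nat, (k <= l <= \rank A)%N -> disc_l A l = 0).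
Proof.
(* Only the partitions and the block form of [A] matter. *)
have A_rs : block_constant A r s by move=> i i' j j' ri sj; rewrite !A_block ri sj.
split; first exact: disc_l_eq0 r_proper s_proper A_rs.
move=> l /andP[le_k_l le_l_rank].
have [f f_proper f_r] : exists2 f : {ffun 'I_m -> 'I_l}, proper_part f & refines f r.
  by apply: exists_proper_refinement; rewrite // le_k_l card_ord (leq_trans le_l_rank (rank_leq_row A)).
have [g g_proper g_s] : exists2 g : {ffun 'I_n -> 'I_l}, proper_part g & refines g s.
  by apply: exists_proper_refinement; rewrite // le_k_l card_ord (leq_trans le_l_rank (rank_leq_col A)).
exact: disc_l_eq0 f_proper g_proper (block_constant_refines A_rs f_r g_s).
Qed.
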